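(* Let $p\ge1$, $k\ge1$, $r\in\{0,\dots,p\}$, and suppose $(c,\{f_i\}_{i=0}^k)$ belongs to $\mathcal M_r(\alpha,\bar b,\bar\rho)$ with associated set $\mathcal B$. Then the model $(c^*,\{f_i^*\}_{i=0}^k)$ with $c^*=c$ and $f_i^*=f_i\circ f_0^{-1}$ for $i=0,\dots,k$ belongs to $\mathcal M_r^*(\alpha,\bar b,\bar\rho)$, with $g_i^*=g_i\circ f_0^{-1}$ for $i=0,\dots,k-1$, $\pi^*=\pi\circ f_0^{-1}$, and $\chi^*=(\psi^{*\top},\theta^{*\top})^\top=((\psi\circ f_0^{-1})^\top,(\theta\circ f_0^{-1})^\top)^\top=\chi\circ f_0^{-1}$ (starred objects being those associated with the starred model). Moreover, one may take $\mathcal B^*=\mathcal B$, where $\mathcal B$ and $\mathcal B^*$ are the sets in condition (iii) for the two models respectively.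
   Context: Model: for $c\in\mathbb R^p$ and maps $f_0,\dots,f_k:\mathbb R^p\to\mathbb R^p$ with $f_i(0)=0$, the VAR $f_0(z_t)=c+\sum_{i=1}^k f_i(z_{t-i})+u_t$. (When $k=1$, blocks indexed by $1,\dots,k-1$ are empty.) Define $g_j(z)=-\sum_{i=j+1}^k f_i(z)$; $\pi(z)=-f_0(z)+\sum_{i=1}^k f_i(z)$; $\mathbf g=(g_1^\top,\dots,g_{k-1}^\top)^\top$. $D\in\mathbb R^{p(k-1)\times p(k-1)}$ has $-I_p$ diagonal blocks, $I_p$ blocks immediately above the diagonal, zeros elsewhere; $E=(I_p,0_{p\times p(k-2)})^\top$. $\alpha_\perp$ is $p\times(p-r)$ of rank $p-r$ with $\alpha_\perp^\top\alpha=0$; $\boldsymbol\alpha=\begin{bmatrix}\alpha & E^\top\\ 0 & I_{p(k-1)}\end{bmatrix}$; for $\theta:\mathbb R^p\to\mathbb R^r$, $\boldsymbol\theta=(\theta^\top,\mathbf g^\top)^\top$, $\mathbf D_0=\begin{bmatrix}0_{r\times p}&0\\0&D\end{bmatrix}$. $\rho_{JSR}(\mathcal A)=\limsup_{t}\sup\{\rho(M_1\cdots M_t)^{1/t}:M_s\in\mathcal A\}$. Class $\mathcal M_r(\alpha,\bar b,\bar\rho)$ ($\alpha\in\mathbb R^{p\times r}$ of rank $r$, $\bar b\in\mathbb R$, $\bar\rho\in[0,1)$): (i) $f_0$ is a homeomorphism of $\mathbb R^p$; (ii) there exist $\mu\in\mathbb R^r$, $\theta:\mathbb R^p\to\mathbb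 R^r$ with $c=\alpha\mu$, $\pi=\alpha\theta$; (iii) there is a closed $\mathcal B\subset\mathbb R^{kp\times[p(k-1)+r]}$ with $\max_{\mathcal B}\|\boldsymbol\beta\|\le\bar b$ and $\rho_{JSR}(\{I+\boldsymbol\beta^\top\boldsymbol\alpha:\boldsymbol\beta\in\mathcal B\})\le\bar\rho$, such that for all $\mathbf z=(z^\top,\boldsymbol\zeta^\top)^\top,\mathbf z'\in\mathbb R^{kp}$ some $\boldsymbol\beta\in\mathcal B$ satisfies $[\boldsymbol\theta(f_0^{-1}(z))+\mathbf D_0\mathbf z]-[\boldsymbol\theta(f_0^{-1}(z'))+\mathbf D_0\mathbf z']=\boldsymbol\beta^\top(\mathbf z-\mathbf z')$. $\mathcal M_r^*(\alpha,\bar b,\bar\rho)$ is the subclass with $f_0$ the identity. $\psi(z)=\alpha_\perp^\top[f_0(z)-\sum_{i=1}^{k-1}g_i(z)]$, $\chi=(\psi^\top,\theta^\top)^\top$. *)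

From HB Require Import structures.
From mathcomp Require Import all_boot all_order all_algebra.
From mathcomp Require Import all_classical all_reals all_analysis.
From mathcomp Require Import complex.
Set Implicit Arguments. Unset Strict Implicit. Unset Printing Implicit Defensive.
Import Order.TTheory GRing.Theory Num.Theory.
Import numFieldNormedType.Exports.
Local Open Scope classical_set_scope.
Local Open Scope ring_scope.

Section Defs.
Variable R : realType.

Definition cmod (z : R[i]) : R := let: Complex a b := z in Num.sqrt (a ^+ 2 + b ^+ 2).

Definition specrad (n : nat) (M : 'M[R]_n) : R :=
  sup [set cmod l | l in [set l : R[i] |
        eigenvalue (map_mx (fun x : R => (x%:C)%C) M) l]].

Definition mxprod (n : nat) (s : seq 'M[R]_n) : 'M[R]_n := foldr mulmx 1%:M s.

Definition jsr (n : nat) (A : set 'M[R]_n) : \bar R :=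
  limn_esup (fun t : nat => ereal_sup
    [set ((specrad (mxprod s)) `^ (t%:R^-1))%:E |
        s in [set s : seq 'M[R]_n | size s = t /\ (forall M, M \in s -> A M)]]).

Definition enorm (m : nat) (v : 'cV[R]_m) : R := Num.sqrt (\sum_i v i 0 ^+ 2).
Definition opnorm (m n : nat) (A : 'M[R]_(m, n)) : R :=
  sup [set enorm (A *m x) | x in [set x : 'cV[R]_n | enorm x <= 1]].

(* coordinate n of a vector in R^p (0 if out of range) *)
Definition coord_of (p : nat) (v : 'cV[R]_p) (n : nat) : R :=
  if (insub n : option 'I_p) is Some i then v i 0 else 0.

Variables (p k : nat).
Notation V := 'cV[R]_p.
Notation q := (k.-1 * p)%N.

Definition gfun (f : nat -> V -> V) (j : nat) (z : V) : V :=
  - \sum_(j.+1 <= i < k.+1) f i z.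

Definition pifun (f : nat -> V -> V) (z : V) : V :=
  - f 0%N z + \sum_(1 <= i < k.+1) f i z.

(* bold g = (g_1^T, ..., g_{k-1}^T)^T in R^{p(k-1)} *)
Definition gvec (f : nat -> V -> V) (z : V) : 'cV[R]_q :=
  \col_(i < q) coord_of (gfun f (i %/ p).+1 z) (i %% p).

(* D : -I_p diagonal blocks, I_p blocks immediately above the diagonal *)
Definition Dmx : 'M[R]_q :=
  \matrix_(i < q, j < q)
     ((if i == j :> nat then -1 else 0) + (if j == (i + p)%N :> nat then 1 else 0)).

Definition Emx : 'M[R]_(q, p) := \matrix_(i < q, j < p) (if i == j :> nat then 1 else 0).

Variable r : nat.

Definition balpha (alpha : 'M[R]_(p, r)) : 'M[R]_(p + q, r + q) :=
  block_mx alpha Emx^T 0 1%:M.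

Definition D0mx : 'M[R]_(r + q, p + q) := block_mx 0 0 0 Dmx.

Definition btheta (f : nat -> V -> V) (theta : V -> 'cV[R]_r) (x : V) : 'cV[R]_(r + q) :=
  col_mx (theta x) (gvec f x).

Definition psifun (f : nat -> V -> V) (aperp : 'M[R]_(p, p - r)) (z : V) : 'cV[R]_(p - r) :=
  aperp^T *m (f 0%N z - \sum_(1 <= i < k) gfun f i z).

Definition chifun (f : nat -> V -> V) (aperp : 'M[R]_(p, p - r)) (theta : V -> 'cV[R]_r)
  (z : V) : 'cV[R]_(p - r + r) := col_mx (psifun f aperp z) (theta z).

(* Membership of (c, f) in M_r(alpha, bbar, rhobar), witnessed by the inverse
   finv of f_0, mu, theta (condition (ii)) and the set B (condition (iii)). *)
Definition M_witness (alpha : 'M[R]_(p, r)) (bbar rhobar : R) (c : V) (f : nat -> V -> V)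
  (finv : V -> V) (mu : 'cV[R]_r) (theta : V -> 'cV[R]_r) (B : set 'M[R]_(p + q, r + q)) : Prop :=
  (* standing model assumption f_i(0) = 0 *)
  (forall i, (i <= k)%N -> f i 0 = 0) /\
  (cancel (f 0%N) finv /\ cancel finv (f 0%N) /\ continuous (f 0%N) /\ continuous finv) /\
  (c = alpha *m mu /\ forall z, pifun f z = alpha *m theta z) /\
  (closed B /\ (forall beta, B beta -> opnorm beta <= bbar) /\
   (jsr [set (1%:M + beta^T *m balpha alpha)%R | beta in B] <= rhobar%:E)%E /\
   forall zz zz' : 'cV[R]_(p + q), exists2 beta, B beta &
     (btheta f theta (finv (usubmx zz)) + D0mx *m zz)
       - (btheta f theta (finv (usubmx zz')) + D0mx *m zz')
     = beta^T *m (zz - zz')).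

Definition M_class alpha bbar rhobar c f : Prop :=
  exists finv mu theta B, @M_witness alpha bbar rhobar c f finv mu theta B.

Definition Mstar_class alpha bbar rhobar c f : Prop :=
  (forall z, f 0%N z = z) /\ M_class alpha bbar rhobar c f.

End Defs.

Arguments gfun {R p} k f j z.
Arguments pifun {R p} k f z.
Arguments gvec {R p} k f z.
Arguments Dmx {R} p k.
Arguments Emx {R} p k.
Arguments balpha {R p} k {r} alpha.
Arguments D0mx {R} p k r.
Arguments btheta {R p} k {r} f theta x.
Arguments psifun {R p} k {r} f aperp z.
Arguments chifun {R p} k {r} f aperp theta z.
Arguments M_witness {R p} k {r} alpha bbar rhobar c f finv mu theta B.
Arguments M_class {R p} k {r} alpha bbar rhobar c f.
Arguments Mstar_class {R p} k {r} alpha bbar rhobar c f.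

From HB Require Import structures.
From mathcomp Require Import all_boot all_order all_algebra.
From mathcomp Require Import all_classical all_reals all_analysis.
From mathcomp Require Import complex.
Import Order.TTheory GRing.Theory Num.Theory.
Import numFieldNormedType.Exports.
Local Open Scope classical_set_scope.
Local Open Scope ring_scope.

(* Every object attached to the model (g_j, pi, bold g, bold theta, psi, chi)
   is built pointwise from the values f_i(z), so precomposing all f_i with
   f_0^{-1} precomposes each of these objects with f_0^{-1}.  In condition
   (iii) the original model already evaluates bold theta at f_0^{-1}(z), so
   the starred model satisfies it with the same set B, and its f_0^* is the
   identity, a trivial homeomorphism. *)

Section PrecomposedModel.
Set Implicit Arguments. Unset Strict Implicit.
Variables (R : realType) (p k r : nat).
Implicit Types (f : nat -> 'cV[R]_p -> 'cV[R]_p) (h : 'cV[R]_p -> 'cV[R]_p).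

Lemma gfun_comp f h j : gfun k (fun i => f i \o h) j = gfun k f j \o h.
Proof. by []. Qed.

Lemma pifun_comp f h : pifun k (fun i => f i \o h) = pifun k f \o h.
Proof. by []. Qed.

Lemma btheta_comp f h (theta : 'cV[R]_p -> 'cV[R]_r) :
  btheta k (fun i => f i \o h) (theta \o h) = btheta k f theta \o h.
Proof. by []. Qed.

Lemma psifun_comp f h (aperp : 'M[R]_(p, p - r)) :
  psifun k (fun i => f i \o h) aperp = psifun k f aperp \o h.
Proof. by []. Qed.

Lemma chifun_comp f h (aperp : 'M[R]_(p, p - r)) (theta : 'cV[R]_p -> 'cV[R]_r) :
  chifun k (fun i => f i \o h) aperp (theta \o h) = chifun k f aperp theta \o h.
Proof. by []. Qed.

Lemma can_fixed0 (g h : 'cV[R]_p -> 'cV[R]_p) : cancel g h -> g 0 = 0 -> h 0 = 0.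
Proof. by move=> gK g0; rewrite -g0 gK. Qed.

Lemma M_witness_comp_inv (alpha : 'M[R]_(p, r)) (bbar rhobar : R) c f finv mu
    (theta : 'cV[R]_p -> 'cV[R]_r) (B : set 'M[R]_(p + k.-1 * p, r + k.-1 * p)) :
  M_witness k alpha bbar rhobar c f finv mu theta B ->
  M_witness k alpha bbar rhobar c (fun i => f i \o finv) id mu (theta \o finv) B.
Proof.
move=> [f_0 [[fK [finvK _]] [[c_alpha pi_alpha] [closedB [normB [jsrB diffB]]]]]].
have finv0 : finv 0 = 0 := can_fixed0 fK (f_0 0%N (leq0n k)).
split; first by move=> i ik /=; rewrite finv0 f_0.
split.
  have -> : f 0%N \o finv = id by apply: funext => z; exact: finvK.
  by split=> //; split=> //; split=> x; exact: cvg_id.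
split; first by split=> // z; rewrite pifun_comp; exact: pi_alpha.
do 3 (split; first done).
by move=> zz zz'; rewrite btheta_comp; exact: diffB.
Qed.

End PrecomposedModel.

Theorem lemmaB2 (R : realType) (p k r : nat) (alpha : 'M[R]_(p, r)) (bbar rhobar : R)
  (aperp : 'M[R]_(p, p - r))
  (c : 'cV[R]_p) (f : nat -> 'cV[R]_p -> 'cV[R]_p) (finv : 'cV[R]_p -> 'cV[R]_p)
  (mu : 'cV[R]_r) (theta : 'cV[R]_p -> 'cV[R]_r) (B : set 'M[R]_(p + k.-1 * p, r + k.-1 * p)) :
  (1 <= p)%N -> (1 <= k)%N -> (r <= p)%N ->
  \rank alpha = r -> 0 <= rhobar < 1 ->
  \rank aperp = (p - r)%N -> aperp^T *m alpha = 0 ->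
  M_witness k alpha bbar rhobar c f finv mu theta B ->
  let fstar := fun i => f i \o finv in
  let cstar := c in
  (* the starred model is in M_r^*, with theta^* = theta o f_0^{-1} and B^* = B *)
  ((forall z, fstar 0%N z = z) /\
   M_witness k alpha bbar rhobar cstar fstar id mu (theta \o finv) B) /\
  Mstar_class k alpha bbar rhobar cstar fstar /\
  (forall i, (i < k)%N -> gfun k fstar i = gfun k f i \o finv) /\
  pifun k fstar = pifun k f \o finv /\
  psifun k fstar aperp = psifun k f aperp \o finv /\
  chifun k fstar aperp (theta \o finv) = chifun k f aperp theta \o finv.
Proof.
move=> _ _ _ _ _ _ _ W fstar cstar.
have fstar0 : forall z, fstar 0%N z = z by case: W => _ [[_ [finvK _]] _].
have Wstar := M_witness_comp_inv W.
split; first by split.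
split; first by split=> //; exists id, mu, (theta \o finv), B.
split; first by move=> i _; exact: gfun_comp.
split; first exact: pifun_comp.
by split; [exact: psifun_comp | exact: chifun_comp].
Qed.
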